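(* Let $G$ be an undirected graph with double cover $H$, let $\alpha\in(0,1]$, $s\in\mathbb{R}^{2n}_{\ge0}$ and a nonnegative residual $r\in\mathbb{R}^{2n}_{\ge0}$, and let $\mathrm{apr}(\alpha,s,r)$ be the approximate PageRank vector defined with respect to $H$. Then $p=\sigma\circ\mathrm{apr}(\alpha,s,r)$ satisfies, for every $u\in V_G$, \[p(u_1)\le\alpha\big(s(u_1)+r(u_2)\big)+(1-\alpha)(pW)(u_1),\qquad p(u_2)\le\alpha\big(s(u_2)+r(u_1)\big)+(1-\alpha)(pW)(u_2).\]
   Context: $G$ has $n$ vertices. The double cover $H$ has vertices $v_1,v_2$ per $v\in V_G$ and edges $\{u_1,v_2\},\{u_2,v_1\}$ per $\{u,v\}\in E_G$. $W=\frac12(I+D_H^{-1}A_H)$ is the lazy random walk matrix of $H$ (row vectors act by $p\mapsto pW$). $\mathrm{pr}(\alpha,s)$ is the unique solution of $\mathrm{pr}=\alpha s+(1-\alpha)\mathrm{pr}\,W$; $\mathrm{apr}(\alpha,s,r)$ is the vector $q$ with $q+\mathrm{pr}(\alpha,r)=\mathrm{pr}(\alpha,s)$. The simplify operator is given by $(\sigma\circ p)(u_1)=\max(0,p(u_1)-p(u_2))$, $(\sigma\circ p)(u_2)=\max(0,p(u_2)-p(u_1))$ for $p\in\mathbb{R}^{2n}$. *)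

From HB Require Import structures.
From mathcomp Require Import all_boot all_order all_algebra.
Set Implicit Arguments. Unset Strict Implicit. Unset Printing Implicit Defensive.
Import Order.TTheory GRing.Theory Num.Theory.
Local Open Scope ring_scope.

(* The double cover H has vertex type V * bool: (v, false) is v_1 and
   (v, true) is v_2. {x, y} is an edge of H iff {x.1, y.1} is an edge of G
   and x, y lie in different copies. *)
Definition adjH (V : finType) (e : rel V) (x y : V * bool) : bool :=
  e x.1 y.1 && (x.2 != y.2).

Definition degH (V : finType) (e : rel V) (x : V * bool) : nat :=
  #|[set y | adjH e x y]|.

Definition walkW (R : fieldType) (V : finType) (e : rel V) (x y : V * bool) : R :=
  2^-1 * (((x == y)%:R : R) + ((adjH e x y)%:R : R) / ((degH e x)%:R : R)).

Definition mulW (R : fieldType) (V : finType) (e : rel V)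
  (p : V * bool -> R) (y : V * bool) : R :=
  \sum_(x : V * bool) p x * walkW R e x y.

Definition is_pr (R : fieldType) (V : finType) (e : rel V) (alpha : R)
  (s x : V * bool -> R) : Prop :=
  forall v, x v = alpha * s v + (1 - alpha) * mulW e x v.

Definition is_apr (R : fieldType) (V : finType) (e : rel V) (alpha : R)
  (s r q : V * bool -> R) : Prop :=
  exists prs prr, is_pr e alpha s prs /\ is_pr e alpha r prr /\
    forall v, q v + prr v = prs v.

Definition simplify (R : realDomainType) (V : finType) (p : V * bool -> R)
  (x : V * bool) : R :=
  Num.max 0 (p x - p (x.1, ~~ x.2)).

(** Since [q = pr(alpha, s) - pr(alpha, r)] and the PageRank equation is
   linear, [q] solves it with seed [s - r].  Swapping the two copies of each
   vertex is an automorphism of the double cover, so it commutes with [W], and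
   [d(v) := q(v) - q(swap v)] solves the PageRank equation with the seed
   [t(v) := (s - r)(v) - (s - r)(swap v) <= s(v) + r(swap v)].  Now
   [sigma q = max(0, d)] dominates [d], and [W] has nonnegative entries, so
   [d = alpha t + (1 - alpha) d W <= alpha (s + r o swap) + (1 - alpha) (sigma q) W];
   the right-hand side is also nonnegative, which bounds [max(0, d)]. *)
From mathcomp Require Import all_boot all_order all_algebra.
From mathcomp Require Import ring lra.
Import Order.TTheory GRing.Theory Num.Theory.
Set Implicit Arguments. Unset Strict Implicit. Unset Printing Implicit Defensive.
Local Open Scope ring_scope.

Section DoubleCoverSwap.

Variables (V : finType) (e : rel V).

Definition swap_copy (x : V * bool) : V * bool := (x.1, ~~ x.2).

Lemma swap_copyK : involutive swap_copy.
Proof. by case=> a b; rewrite /swap_copy /= negbK. Qed.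

Lemma swap_copy_inj : injective swap_copy.
Proof. exact: inv_inj swap_copyK. Qed.

Lemma adjH_swap x y : adjH e (swap_copy x) y = adjH e x (swap_copy y).
Proof. by case: x y => a b [c d]; rewrite /adjH /swap_copy /=; case: b; case: d. Qed.

Lemma degH_swap x : degH e (swap_copy x) = degH e x.
Proof.
rewrite /degH -(card_imset [set y | adjH e x y] swap_copy_inj).
rewrite (can2_imset_pre _ swap_copyK swap_copyK); apply: eq_card => y.
by rewrite !inE adjH_swap.
Qed.

Lemma walkW_swap (R : fieldType) x y :
  walkW R e (swap_copy x) (swap_copy y) = walkW R e x y.
Proof. by rewrite /walkW degH_swap adjH_swap swap_copyK (inj_eq swap_copy_inj). Qed.

Lemma mulW_swap (R : fieldType) (f : V * bool -> R) x :
  mulW e (f \o swap_copy) x = mulW e f (swap_copy x).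
Proof.
rewrite /mulW (reindex_inj swap_copy_inj); apply: eq_bigr => y _.
by rewrite -walkW_swap /= !swap_copyK.
Qed.

End DoubleCoverSwap.

Arguments swap_copy {V}.

Section WalkMatrix.

Variables (V : finType) (e : rel V).

Lemma mulWB (R : fieldType) (f g : V * bool -> R) x :
  mulW e (fun y => f y - g y) x = mulW e f x - mulW e g x.
Proof. by rewrite /mulW -sumrB; apply: eq_bigr => y _; rewrite mulrBl. Qed.

Variable R : realFieldType.

Lemma walkW_ge0 x y : 0 <= walkW R e x y.
Proof. by rewrite /walkW mulr_ge0 ?invr_ge0 ?addr_ge0 ?divr_ge0 ?ler0n. Qed.

Lemma mulW_ge0 (f : V * bool -> R) x : (forall y, 0 <= f y) -> 0 <= mulW e f x.
Proof. by move=> f_ge0; rewrite sumr_ge0 // => y _; rewrite mulr_ge0 ?walkW_ge0. Qed.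

Lemma ler_mulW (f g : V * bool -> R) x :
  (forall y, f y <= g y) -> mulW e f x <= mulW e g x.
Proof. by move=> le_fg; rewrite ler_sum // => y _; rewrite ler_wpM2r ?walkW_ge0. Qed.

End WalkMatrix.

Section PageRank.

Variables (R : realFieldType) (V : finType) (e : rel V) (alpha : R).

Lemma is_prB (s1 s2 x1 x2 : V * bool -> R) :
  is_pr e alpha s1 x1 -> is_pr e alpha s2 x2 ->
  is_pr e alpha (fun v => s1 v - s2 v) (fun v => x1 v - x2 v).
Proof. by move=> pr1 pr2 v; rewrite mulWB pr1 pr2; ring. Qed.

Lemma is_pr_swap (s x : V * bool -> R) :
  is_pr e alpha s x -> is_pr e alpha (s \o swap_copy) (x \o swap_copy).
Proof. by move=> pr_x v; rewrite /= mulW_swap pr_x. Qed.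

Lemma is_apr_pr (s r q : V * bool -> R) :
  is_apr e alpha s r q -> is_pr e alpha (fun v => s v - r v) q.
Proof.
case=> [prs [prr [pr_s [pr_r qE]]]] v.
have q_prB w : q w = prs w - prr w by rewrite -qE addrK.
rewrite q_prB (is_prB pr_s pr_r v); congr (_ + _ * _).
by apply: eq_bigr => w _; rewrite q_prB.
Qed.

Lemma is_pr_pos_part_le (t b d : V * bool -> R) :
  0 <= alpha -> alpha <= 1 -> is_pr e alpha t d ->
  (forall v, t v <= b v) -> (forall v, 0 <= b v) ->
  forall v, Num.max 0 (d v)
            <= alpha * b v + (1 - alpha) * mulW e (fun w => Num.max 0 (d w)) v.
Proof.
move=> alpha_ge0 alpha_le1 pr_d le_tb b_ge0 v.
have one_alpha_ge0 : 0 <= 1 - alpha by rewrite subr_ge0.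
have pos_ge0 w : 0 <= Num.max 0 (d w) by rewrite le_max lexx.
rewrite ge_max addr_ge0 ?mulr_ge0 ?mulW_ge0 //= pr_d.
apply: lerD; first by rewrite ler_wpM2l.
by rewrite ler_wpM2l // ler_mulW // => w; rewrite le_max lexx orbT.
Qed.

End PageRank.

Theorem lemma5 (R : realFieldType) (V : finType) (e : rel V)
  (e_sym : symmetric e) (alpha : R) (s r q : V * bool -> R) :
  0 < alpha -> alpha <= 1 ->
  (forall x, 0 <= s x) -> (forall x, 0 <= r x) ->
  is_apr e alpha s r q ->
  let p := simplify q in
  forall u : V,
    p (u, false) <= alpha * (s (u, false) + r (u, true))
                    + (1 - alpha) * mulW e p (u, false) /\
    p (u, true) <= alpha * (s (u, true) + r (u, false))
                    + (1 - alpha) * mulW e p (u, true).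
Proof.
move=> alpha_gt0 alpha_le1 s_ge0 r_ge0 apr_q p.
have pr_q := is_apr_pr apr_q.
have pr_d := is_prB pr_q (is_pr_swap pr_q).
have le_seed v : s v - r v - (s (swap_copy v) - r (swap_copy v))
                 <= s v + r (swap_copy v).
  by have := r_ge0 v; have := s_ge0 (swap_copy v); lra.
have bound := is_pr_pos_part_le (ltW alpha_gt0) alpha_le1 pr_d le_seed.
by move=> u; split; apply: bound => v; rewrite addr_ge0.
Qed.
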